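(* Let $\mathcal{D}$ be a triangulated category with small coproducts and let $T_1,T_2$ be exceptional objects satisfying (A1) $\operatorname{Hom}_{\mathcal{D}}(T_1,T_2[k])=0$ for all $k\in\mathbb{Z}$ and (A2) $\operatorname{Hom}_{\mathcal{D}}(T_2,T_1[k])=0$ for all $k\in\mathbb{Z}\setminus\{0,1\}$. Let $\alpha:T_2\to T_1[1]$ be a morphism and $T_1\to T\to T_2\xrightarrow{\alpha}T_1[1]$ a triangle. Then: (1) $T\oplus T_2$ is exceptional if and only if $\alpha$ is left-universal; (2) $T\oplus T_1$ is exceptional if and only if $\alpha$ is right-universal.
   Context: An object $T$ is exceptional if $\operatorname{Hom}_{\mathcal{D}}(T,T[k])=0$ for all $k\neq0$. A morphism $\alpha:M\to N$ is left-universal if the map $\operatorname{End}_{\mathcal{D}}(M)\to\operatorname{Hom}_{\mathcal{D}}(M,N)$, $h\mapsto\alpha\circ h$, is surjective, and right-universal if the map $\operatorname{End}_{\mathcal{D}}(N)\to\operatorname{Hom}_{\mathcal{D}}(M,N)$, $h\mapsto h\circ\alpha$, is surjective. *)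

From HB Require Import structures.
From mathcomp Require Import all_boot all_order all_algebra.
Set Implicit Arguments. Unset Strict Implicit. Unset Printing Implicit Defensive.
Import GRing.Theory.
Local Open Scope ring_scope.

Record additive := Additive {
  Obj : Type;
  Mor : Obj -> Obj -> zmodType;
  idm : forall a, Mor a a;
  comp : forall a b c, Mor b c -> Mor a b -> Mor a c;
  compA : forall a b c d (h : Mor c d) (g : Mor b c) (f : Mor a b),
      comp h (comp g f) = comp (comp h g) f;
  comp1m : forall a b (f : Mor a b), comp (idm b) f = f;
  compm1 : forall a b (f : Mor a b), comp f (idm a) = f;
  compDl : forall a b c (g1 g2 : Mor b c) (f : Mor a b),
      comp (g1 + g2) f = comp g1 f + comp g2 f;
  compDr : forall a b c (g : Mor b c) (f1 f2 : Mor a b),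
      comp g (f1 + f2) = comp g f1 + comp g f2;
  zobj : Obj;
  zobj_in : forall a (f : Mor a zobj), f = 0;
  zobj_out : forall a (f : Mor zobj a), f = 0;
  biprod_ex : forall a b, exists (p : Obj) (i1 : Mor a p) (i2 : Mor b p)
      (p1 : Mor p a) (p2 : Mor p b),
      [/\ comp p1 i1 = idm a, comp p2 i2 = idm b, comp p1 i2 = 0,
          comp p2 i1 = 0 & comp i1 p1 + comp i2 p2 = idm p]
}.
Arguments Mor {C} : rename.
Arguments idm {C} a : rename.
Arguments comp {C a b c} : rename.
Arguments zobj {C} : rename.

Section Notions.
Variable C : additive.

Definition is_iso (a b : Obj C) (u : Mor a b) :=
  exists v : Mor b a, comp u v = idm b /\ comp v u = idm a.

Definition is_biprod (a b P : Obj C) (i1 : Mor a P) (i2 : Mor b P)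
    (p1 : Mor P a) (p2 : Mor P b) :=
  [/\ comp p1 i1 = idm a, comp p2 i2 = idm b, comp p1 i2 = 0,
      comp p2 i1 = 0 & comp i1 p1 + comp i2 p2 = idm P].

Definition has_small_coproducts :=
  forall (I : Type) (F : I -> Obj C), exists (P : Obj C) (inj : forall i, Mor (F i) P),
    forall (Y : Obj C) (phi : forall i, Mor (F i) Y),
      exists! phi' : Mor P Y, forall i, comp phi' (inj i) = phi i.

Definition left_universal (M N : Obj C) (alpha : Mor M N) :=
  forall beta : Mor M N, exists h : Mor M M, comp alpha h = beta.

Definition right_universal (M N : Obj C) (alpha : Mor M N) :=
  forall beta : Mor M N, exists h : Mor N N, comp h alpha = beta.
End Notions.

Record shift (C : additive) := Shift {
  sh : Obj C -> Obj C;
  shm : forall a b, Mor a b -> Mor (sh a) (sh b);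
  shm1 : forall a, shm (idm a) = idm (sh a);
  shmM : forall a b c (g : Mor b c) (f : Mor a b),
      shm (comp g f) = comp (shm g) (shm f);
  shmD : forall a b (f g : Mor a b), shm (f + g) = shm f + shm g;
  shm_bij : forall a b, bijective (@shm a b);
  sh_esurj : forall b, exists a (u : Mor (sh a) b), is_iso u
}.
Arguments sh {C} s.
Arguments shm {C} s {a b}.

Record triangle (C : additive) (s : Obj C -> Obj C) := Tri {
  tX : Obj C; tY : Obj C; tZ : Obj C;
  tf : Mor tX tY; tg : Mor tY tZ; th : Mor tZ (s tX) }.
Arguments Tri {C s tX tY tZ} tf tg th.

Record triangulated (C : additive) := Triangulated {
  Sh : shift C;
  dist : @triangle C (sh Sh) -> Prop;
  tr_id : forall a : Obj C, dist (Tri (idm a) (0 : Mor a zobj) (0 : Mor zobj (sh Sh a)));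
  tr_iso : forall (X Y Z X' Y' Z' : Obj C) (f : Mor X Y) (g : Mor Y Z) (h : Mor Z (sh Sh X))
      (f' : Mor X' Y') (g' : Mor Y' Z') (h' : Mor Z' (sh Sh X'))
      (u : Mor X X') (v : Mor Y Y') (w : Mor Z Z'),
      is_iso u -> is_iso v -> is_iso w ->
      comp v f = comp f' u -> comp w g = comp g' v -> comp (shm Sh u) h = comp h' w ->
      dist (Tri f g h) -> dist (Tri f' g' h');
  tr_ext : forall (X Y : Obj C) (f : Mor X Y),
      exists (Z : Obj C) (g : Mor Y Z) (h : Mor Z (sh Sh X)), dist (Tri f g h);
  tr_rot : forall (X Y Z : Obj C) (f : Mor X Y) (g : Mor Y Z) (h : Mor Z (sh Sh X)),
      dist (Tri f g h) -> dist (Tri g h (- shm Sh f));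
  tr_mor : forall (X Y Z X' Y' Z' : Obj C) (f : Mor X Y) (g : Mor Y Z) (h : Mor Z (sh Sh X))
      (f' : Mor X' Y') (g' : Mor Y' Z') (h' : Mor Z' (sh Sh X'))
      (u : Mor X X') (v : Mor Y Y'),
      dist (Tri f g h) -> dist (Tri f' g' h') -> comp v f = comp f' u ->
      exists w : Mor Z Z', comp w g = comp g' v /\ comp (shm Sh u) h = comp h' w;
  tr_oct : forall (X Y Z Z' X' Y' : Obj C) (f : Mor X Y) (g : Mor Y Z)
      (h : Mor Y Z') (i1 : Mor Z' (sh Sh X))
      (k : Mor Z X') (i2 : Mor X' (sh Sh Y))
      (l : Mor Z Y') (i3 : Mor Y' (sh Sh X)),
      dist (Tri f h i1) -> dist (Tri g k i2) -> dist (Tri (comp g f) l i3) ->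
      exists (a : Mor Z' Y') (b : Mor Y' X'),
        [/\ comp a h = comp l g, comp i3 a = i1, comp b l = k,
            comp i2 b = comp (shm Sh f) i3 &
            dist (Tri a b (comp (shm Sh h) i2))]
}.
Arguments Sh {C} t : rename.
Arguments dist {C} t : rename.

Section Shifted.
Variables (C : additive) (D : triangulated C).

Definition shiftn (n : nat) (X : Obj C) : Obj C := iter n (sh (Sh D)) X.

(* Mor(X, Y[k]) for k : int; for k = -(n+1) this is Mor(X[n+1], Y),
   which is canonically isomorphic since the shift is an equivalence. *)
Definition homk (X Y : Obj C) (k : int) : zmodType :=
  match k with
  | Posz n => Mor X (shiftn n Y)
  | Negz n => Mor (shiftn n.+1 X) Y
  end.

Definition exceptional (T : Obj C) :=
  forall k : int, k != 0 -> forall x : homk T T k, x = 0.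
End Shifted.

(* Rotating the triangle T1 -> T -> T2 -> T1[1] and applying Hom(T2, -) and
   Hom(-, T1[1]) gives exact sequences
     Hom(T2, T2) --alpha_*--> Hom(T2, T1[1]) --> Hom(T2, T[1]) --> Hom(T2, T2[1]) = 0,
     Hom(T1[1], T1[1]) --alpha^*--> Hom(T2, T1[1]) --> Hom(T, T1[1]) --> Hom(T1, T1[1]) = 0,
   so Hom(T2, T[1]) = 0 iff alpha is left-universal, and Hom(T, T1[1]) = 0 iff
   alpha is right-universal.  All other graded Homs among the summands of
   T (+) T2, resp. T (+) T1, vanish by (A1), (A2) and the exceptionality of T1
   and T2, through the long exact sequences of the triangle. *)
From Pilot Require Import Defs.
From HB Require Import structures.
From mathcomp Require Import all_boot all_order all_algebra.
Set Implicit Arguments. Unset Strict Implicit. Unset Printing Implicit Defensive.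
(* Re-importing Defs makes [additive], [comp], [compA] refer to it rather than
   to the homonymous MathComp constants. *)
Import GRing.Theory Pilot.Defs.
Local Open Scope ring_scope.

Section Triangulated.
Variables (C : additive) (D : triangulated C).
Local Notation sf := (sh (Sh D)).
Local Notation sm := (shm (Sh D)).

Lemma comp0m (a b c : Obj C) (f : Mor a b) : comp (0 : Mor b c) f = 0.
Proof. by apply: (addrI (comp (0 : Mor b c) f)); rewrite -compDl !addr0. Qed.

Lemma compm0 (a b c : Obj C) (g : Mor b c) : comp g (0 : Mor a b) = 0.
Proof. by apply: (addrI (comp g (0 : Mor a b))); rewrite -compDr !addr0. Qed.

Lemma compNm (a b c : Obj C) (g : Mor b c) (f : Mor a b) :
  comp (- g) f = - comp g f.
Proof. by apply: (addrI (comp g f)); rewrite -compDl !subrr comp0m. Qed.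

Lemma compmN (a b c : Obj C) (g : Mor b c) (f : Mor a b) :
  comp g (- f) = - comp g f.
Proof. by apply: (addrI (comp g f)); rewrite -compDr !subrr compm0. Qed.

Lemma shm0 (a b : Obj C) : sm (0 : Mor a b) = 0.
Proof. by apply: (addrI (sm (0 : Mor a b))); rewrite -shmD !addr0. Qed.

Lemma shm_inj (a b : Obj C) : injective (@shm _ (Sh D) a b).
Proof. exact: bij_inj (shm_bij _ a b). Qed.

Lemma shm_surj (a b : Obj C) (w : Mor (sf a) (sf b)) : exists x : Mor a b, sm x = w.
Proof. by case: (shm_bij (Sh D) a b) => inv _ invK; exists (inv w). Qed.

Section Triangle.
Variables (X Y Z : Obj C) (f : Mor X Y) (g : Mor Y Z) (h : Mor Z (sf X)).
Hypothesis Htri : dist D (Tri f g h).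

Lemma dist_comp0 : comp g f = 0.
Proof.
have [w [<- _]] := tr_mor (tr_id D X) Htri (erefl : comp f (idm X) = comp f (idm X)).
exact: compm0.
Qed.

Lemma dist_rot3 : dist D (Tri (- sm f) (- sm g) (- sm h)).
Proof. by do 3 apply: tr_rot. Qed.

Lemma dist_exact_cov (W : Obj C) (phi : Mor W Y) :
  comp g phi = 0 -> exists psi : Mor W X, comp f psi = phi.
Proof.
move=> g_phi.
have Hc : comp (0 : Mor zobj Z) (0 : Mor W zobj) = comp g phi by rewrite comp0m g_phi.
have [w [_]] := tr_mor (tr_rot (tr_id D W)) (tr_rot Htri) Hc.
rewrite shm1 compmN compm1 compNm => /oppr_inj Hw.
have [psi Hpsi] := shm_surj w.
by exists psi; apply: shm_inj; rewrite shmM Hpsi.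
Qed.

Lemma dist_exact_contra (W : Obj C) (phi : Mor Y W) :
  comp phi f = 0 -> exists psi : Mor Z W, comp psi g = phi.
Proof.
move=> phi_f.
have Hc : comp (sm phi) (- sm f) = comp (0 : Mor zobj (sf W)) (0 : Mor (sf X) zobj).
  by rewrite compmN -shmM phi_f shm0 oppr0 comp0m.
have [w [+ _]] := tr_mor dist_rot3 (tr_rot (tr_rot (tr_id D W))) Hc.
rewrite compmN compNm shm1 comp1m => /oppr_inj Hw.
have [psi Hpsi] := shm_surj w.
by exists psi; apply: shm_inj; rewrite shmM Hpsi.
Qed.

Lemma mor_zero_dist_cov (W : Obj C) :
  (forall x : Mor W X, x = 0) -> (forall x : Mor W Z, x = 0) ->
  forall x : Mor W Y, x = 0.
Proof.
move=> HX HZ x; have [psi <-] := dist_exact_cov (HZ (comp g x)).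
by rewrite (HX psi) compm0.
Qed.

Lemma mor_zero_dist_contra (W : Obj C) :
  (forall x : Mor X W, x = 0) -> (forall x : Mor Z W, x = 0) ->
  forall x : Mor Y W, x = 0.
Proof.
move=> HX HZ x; have [psi <-] := dist_exact_contra (HX (comp x f)).
by rewrite (HZ psi) comp0m.
Qed.

Lemma dist_postcomp0_iff_surj (W : Obj C) :
  (forall y : Mor W Y, comp g y = 0) <->
  (forall y : Mor W Y, exists x : Mor W X, comp f x = y).
Proof.
split=> [g0 y | surj y]; first exact: dist_exact_cov.
by have [x <-] := surj y; rewrite compA dist_comp0 comp0m.
Qed.

Lemma dist_precomp0_iff_surj (W : Obj C) :
  (forall y : Mor Y W, comp y f = 0) <->
  (forall y : Mor Y W, exists z : Mor Z W, comp z g = y).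
Proof.
split=> [f0 y | surj y]; first exact: dist_exact_contra.
by have [z <-] := surj y; rewrite -compA dist_comp0 compm0.
Qed.

Lemma dist_mor_zero_iff_postcomp0 (W : Obj C) :
  (forall z : Mor W Z, z = 0) ->
  (forall y : Mor W Y, y = 0) <-> (forall x : Mor W X, comp f x = 0).
Proof.
move=> HZ; split=> [Y0 x | f0 y]; first exact: Y0.
by have [x <-] := dist_exact_cov (HZ (comp g y)).
Qed.

Lemma dist_mor_zero_iff_precomp0 (W : Obj C) :
  (forall x : Mor X W, x = 0) ->
  (forall y : Mor Y W, y = 0) <-> (forall z : Mor Z W, comp z g = 0).
Proof.
move=> HX; split=> [Y0 z | g0 y]; first exact: Y0.
by have [z <-] := dist_exact_contra (HX (comp y f)).
Qed.

End Triangle.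

Lemma dist_left_universalE (X Y Z : Obj C) (f : Mor X Y) (g : Mor Y Z) (h : Mor Z (sf X)) :
  dist D (Tri f g h) ->
  (forall z : Mor Z (sf Z), z = 0) ->
  (forall y : Mor Z (sf Y), y = 0) <-> left_universal h.
Proof.
move=> Htri HZZ; apply: iff_trans (dist_mor_zero_iff_postcomp0 (dist_rot3 Htri) HZZ) _.
exact: dist_postcomp0_iff_surj (tr_rot (tr_rot Htri)) Z.
Qed.

Lemma dist_right_universalE (X Y Z : Obj C) (f : Mor X Y) (g : Mor Y Z) (h : Mor Z (sf X)) :
  dist D (Tri f g h) ->
  (forall x : Mor X (sf X), x = 0) ->
  (forall y : Mor Y (sf X), y = 0) <-> right_universal h.
Proof.
move=> Htri HXX; apply: iff_trans (dist_mor_zero_iff_precomp0 Htri HXX) _.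
exact: dist_precomp0_iff_surj (tr_rot Htri) (sf X).
Qed.

Lemma dist_shiftn n (X Y Z : Obj C) (f : Mor X Y) (g : Mor Y Z) (h : Mor Z (sf X)) :
  dist D (Tri f g h) ->
  exists (f' : Mor (shiftn D n X) (shiftn D n Y)) (g' : Mor (shiftn D n Y) (shiftn D n Z))
    (h' : Mor (shiftn D n Z) (sf (shiftn D n X))), dist D (Tri f' g' h').
Proof.
move=> H; elim: n => [|n [f' [g' [h' IH]]]]; first by exists f, g, h.
by exists (- sm f'), (- sm g'), (- sm h'); apply: dist_rot3.
Qed.

Fixpoint shmn (n : nat) (a b : Obj C) (f : Mor a b) {struct n} :
  Mor (shiftn D n a) (shiftn D n b) :=
  if n is m.+1 then sm (shmn m f) else f.

Lemma shmnM n (a b c : Obj C) (g : Mor b c) (f : Mor a b) :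
  shmn n (comp g f) = comp (shmn n g) (shmn n f).
Proof. by elim: n => [|n IH] //=; rewrite IH shmM. Qed.

Lemma shmnD n (a b : Obj C) (f g : Mor a b) : shmn n (f + g) = shmn n f + shmn n g.
Proof. by elim: n => [|n IH] //=; rewrite IH shmD. Qed.

Lemma shmn1 n (a : Obj C) : shmn n (idm a) = idm _.
Proof. by elim: n => [|n IH] //=; rewrite IH shm1. Qed.

Lemma shmn0 n (a b : Obj C) : shmn n (0 : Mor a b) = 0.
Proof. by elim: n => [|n IH] //=; rewrite IH shm0. Qed.

Lemma is_biprod_shiftn n (A B P : Obj C) (i1 : Mor A P) (i2 : Mor B P)
    (p1 : Mor P A) (p2 : Mor P B) :
  is_biprod i1 i2 p1 p2 -> is_biprod (shmn n i1) (shmn n i2) (shmn n p1) (shmn n p2).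
Proof.
case=> h11 h22 h12 h21 hid.
by split; rewrite -!shmnM ?h11 ?h22 ?h12 ?h21 ?shmn0 ?shmn1 // -shmnD hid shmn1.
Qed.

Section Biproduct.
Variables (A B P : Obj C) (i1 : Mor A P) (i2 : Mor B P) (p1 : Mor P A) (p2 : Mor P B).
Hypothesis Hb : is_biprod i1 i2 p1 p2.

Lemma mor_zero_biprod_l (W : Obj C) :
  (forall x : Mor A W, x = 0) -> (forall x : Mor B W, x = 0) ->
  forall x : Mor P W, x = 0.
Proof.
have [_ _ _ _ hid] := Hb; move=> HA HB x.
by rewrite -(compm1 x) -hid compDr !compA (HA (comp x i1)) (HB (comp x i2)) !comp0m addr0.
Qed.

Lemma mor_zero_biprod_r (W : Obj C) :
  (forall x : Mor W A, x = 0) -> (forall x : Mor W B, x = 0) ->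
  forall x : Mor W P, x = 0.
Proof.
have [_ _ _ _ hid] := Hb; move=> HA HB x.
by rewrite -(comp1m x) -hid compDl -!compA (HA (comp p1 x)) (HB (comp p2 x)) !compm0 addr0.
Qed.

End Biproduct.

Lemma exceptional_retract_hom1 (A B P : Obj C) (i : Mor A P) (p : Mor P A)
    (j : Mor B P) (q : Mor P B) :
  comp p i = idm A -> comp q j = idm B -> exceptional D P ->
  forall y : Mor B (sf A), y = 0.
Proof.
move=> pi qj EP y.
have -> : y = comp (sm p) (comp (comp (sm i) (comp y q)) j).
  by rewrite !compA -shmM pi shm1 comp1m -compA qj compm1.
by rewrite (EP 1 erefl (comp (sm i) (comp y q))) comp0m compm0.
Qed.

Definition homk_zero (X Y : Obj C) (k : int) := forall x : homk D X Y k, x = 0.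

Lemma homk_zero_dist_cov k (W X Y Z : Obj C) (f : Mor X Y) (g : Mor Y Z) (h : Mor Z (sf X)) :
  dist D (Tri f g h) -> homk_zero W X k -> homk_zero W Z k -> homk_zero W Y k.
Proof.
case: k => n H HX HZ.
- have [f' [g' [h' H']]] := dist_shiftn n H; exact: (mor_zero_dist_cov H' HX HZ).
- exact: (mor_zero_dist_cov H HX HZ).
Qed.

Lemma homk_zero_dist_contra k (W X Y Z : Obj C) (f : Mor X Y) (g : Mor Y Z) (h : Mor Z (sf X)) :
  dist D (Tri f g h) -> homk_zero X W k -> homk_zero Z W k -> homk_zero Y W k.
Proof.
case: k => n H HX HZ.
- exact: (mor_zero_dist_contra H HX HZ).
- have [f' [g' [h' H']]] := dist_shiftn n.+1 H; exact: (mor_zero_dist_contra H' HX HZ).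
Qed.

Lemma exceptional_biprod (A B P : Obj C) (i1 : Mor A P) (i2 : Mor B P)
    (p1 : Mor P A) (p2 : Mor P B) :
  is_biprod i1 i2 p1 p2 ->
  (forall k, k != 0 -> homk_zero A A k) -> (forall k, k != 0 -> homk_zero A B k) ->
  (forall k, k != 0 -> homk_zero B A k) -> (forall k, k != 0 -> homk_zero B B k) ->
  exceptional D P.
Proof.
move=> Hb HAA HAB HBA HBB k k0.
move: (HAA k k0) (HAB k k0) (HBA k k0) (HBB k k0); case: k {k0} => n hAA hAB hBA hBB.
- apply: (mor_zero_biprod_l Hb); exact: (mor_zero_biprod_r (is_biprod_shiftn n Hb)).
- apply: (mor_zero_biprod_l (is_biprod_shiftn n.+1 Hb)); exact: (mor_zero_biprod_r Hb).
Qed.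

End Triangulated.

Unset Implicit Arguments.
Set Strict Implicit.

Theorem proposition2p2 (C : additive) (D : triangulated C)
  (Hcop : has_small_coproducts C) (T1 T2 : Obj C)
  (E1 : exceptional D T1) (E2 : exceptional D T2)
  (A1 : forall (k : int) (x : homk D T1 T2 k), x = 0)
  (A2 : forall k : int, k != 0 -> k != 1 -> forall x : homk D T2 T1 k, x = 0)
  (T : Obj C) (f : Mor T1 T) (g : Mor T T2) (alpha : Mor T2 (sh (Sh D) T1))
  (Htri : dist D (Tri f g alpha)) :
  (forall (P : Obj C) (i1 : Mor T P) (i2 : Mor T2 P) (p1 : Mor P T) (p2 : Mor P T2),
      is_biprod i1 i2 p1 p2 -> (exceptional D P <-> left_universal alpha)) /\
  (forall (P : Obj C) (i1 : Mor T P) (i2 : Mor T1 P) (p1 : Mor P T) (p2 : Mor P T1),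
      is_biprod i1 i2 p1 p2 -> (exceptional D P <-> right_universal alpha)).
Proof.
have HT_T2 k : k != 0 -> homk_zero D T T2 k.
  by move=> k0; apply: homk_zero_dist_contra Htri (A1 k) (E2 k k0).
have HT1_T k : k != 0 -> homk_zero D T1 T k.
  by move=> k0; apply: homk_zero_dist_cov Htri (E1 k k0) (A1 k).
have HT_T1 k : k != 0 -> k != 1 -> homk_zero D T T1 k.
  by move=> k0 k1; apply: homk_zero_dist_contra Htri (E1 k k0) (A2 k k0 k1).
have HT2_T k : k != 0 -> k != 1 -> homk_zero D T2 T k.
  by move=> k0 k1; apply: homk_zero_dist_cov Htri (A2 k k0 k1) (E2 k k0).
have LU_iff := dist_left_universalE Htri (E2 1 erefl).
have RU_iff := dist_right_universalE Htri (E1 1 erefl).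
split=> P i1 i2 p1 p2 Hb; have [h11 h22 _ _ _] := Hb; split=> [EP | U].
- exact/LU_iff/(exceptional_retract_hom1 h11 h22 EP).
- have {}HT2_T k : k != 0 -> homk_zero D T2 T k.
    by move=> k0; have [-> | k1] := eqVneq k 1; [exact/LU_iff | exact: HT2_T].
  apply: (exceptional_biprod Hb) => // k k0.
  exact: homk_zero_dist_contra Htri (HT1_T k k0) (HT2_T k k0).
- exact/RU_iff/(exceptional_retract_hom1 h22 h11 EP).
- have {}HT_T1 k : k != 0 -> homk_zero D T T1 k.
    by move=> k0; have [-> | k1] := eqVneq k 1; [exact/RU_iff | exact: HT_T1].
  apply: (exceptional_biprod Hb) => // k k0.
  exact: homk_zero_dist_cov Htri (HT_T1 k k0) (HT_T2 k k0).
Qed.
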